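(* Let $(X,\mathcal F)$ be a measurable space in which every singleton $\{t\}$, $t\in X$, belongs to $\mathcal F$, and let $g,h\colon X\to[0,\infty)$ be measurable with $\inf_{x\in X} g(x)h(x)=0$. Then there is no functional $c\colon\mathcal M\to[0,\infty)$ such that for every $\mu\in\mathcal M$ and every measurable $f\colon X\to[0,\infty)$ with $\int_X f\,d\mu<\infty$, $$\int_X f\,d\mu\le c(\mu)\Big(\int_X g f^2\,d\mu\Big)^{1/4}\Big(\int_X h f^2\,d\mu\Big)^{1/4},$$ where all integrals are Choquet integrals.
   Context: $\mathcal M$ denotes the set of monotone measures on $(X,\mathcal F)$, i.e. maps $\mu\colon\mathcal F\to[0,\infty]$ with $\mu(\emptyset)=0$, $\mu(X)>0$ and $\mu(A)\le\mu(B)$ for $A\subset B$. The Choquet integral of a measurable $f\colon X\to[0,\infty)$ on $A\in\mathcal F$ is $\int_A f\,d\mu=\int_0^\infty\mu(A\cap\{f\ge t\})\,dt$ (improper Riemann integral). *)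

From Stdlib Require Import Reals Lra Classical ClassicalEpsilon.
Open Scope R_scope.

(* Extended non-negative reals [0, +oo]: finite values and +oo. *)
Inductive ereal : Type := EFin (r : R) | EInf.

Definition ele (a b : ereal) : Prop :=
  match a, b with
  | EFin x, EFin y => x <= y
  | _, EInf => True
  | EInf, EFin _ => False
  end.

Definition elt (a b : ereal) : Prop :=
  match a, b with
  | EFin x, EFin y => x < y
  | EFin _, EInf => True
  | EInf, _ => False
  end.

(* multiplication on [0,+oo] with the measure-theoretic convention 0 * oo = 0 *)
Definition emul (a b : ereal) : ereal :=
  match a, b with
  | EFin x, EFin y => EFin (x * y)
  | EFin x, EInf => if Req_EM_T x 0 then EFin 0 else EInf
  | EInf, EFin y => if Req_EM_T y 0 then EFin 0 else EInf
  | EInf, EInf => EInf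
  end.

Definition epow14 (a : ereal) : ereal :=
  match a with
  | EFin x => if Rle_dec x 0 then EFin 0 else EFin (Rpower x (1/4))
  | EInf => EInf
  end.

Record sigma_algebra (X : Type) (F : (X -> Prop) -> Prop) : Prop := {
  sa_empty : F (fun _ => False);
  sa_compl : forall A, F A -> F (fun x => ~ A x);
  sa_union : forall A : nat -> X -> Prop,
      (forall n, F (A n)) -> F (fun x => exists n, A n x)
}.

(* measurability of a real function f : X -> R w.r.t. F and the Borel sets
   (via the standard equivalent characterization by upper level sets) *)
Definition measurable_fun {X : Type} (F : (X -> Prop) -> Prop) (f : X -> R) : Prop :=
  forall t : R, F (fun x => t <= f x).

Record monotone_measure {X : Type} (F : (X -> Prop) -> Prop) : Type := {
  mm_fun :> (X -> Prop) -> ereal;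
  mm_nonneg : forall A, F A -> ele (EFin 0) (mm_fun A);
  mm_empty : mm_fun (fun _ => False) = EFin 0;
  mm_full_pos : elt (EFin 0) (mm_fun (fun _ => True));
  mm_mono : forall A B, F A -> F B -> (forall x, A x -> B x) ->
      ele (mm_fun A) (mm_fun B)
}.

Definition improper_RInt_0_inf (phi : R -> R) (v : R) : Prop :=
  forall eps, 0 < eps -> exists a0 B, 0 < a0 /\
    forall a b, 0 < a -> a <= a0 -> B <= b -> a <= b ->
      exists pr : Riemann_integrable phi a b, Rabs (RiemannInt pr - v) < eps.

Definition efin_part (a : ereal) : R :=
  match a with EFin x => x | EInf => 0 end.

(* Choquet integral  int_A f dmu = int_0^oo mu(A /\ {f >= t}) dt
   (improper Riemann integral, valued in [0,+oo]). *)
Definition choquet_fin {X : Type} {F : (X -> Prop) -> Prop}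
    (mu : monotone_measure F) (A : X -> Prop) (f : X -> R) (v : R) : Prop :=
  (forall t, 0 < t -> mu (fun x => A x /\ t <= f x) <> EInf) /\
  improper_RInt_0_inf (fun t => efin_part (mu (fun x => A x /\ t <= f x))) v.

Definition choquet {X : Type} {F : (X -> Prop) -> Prop}
    (mu : monotone_measure F) (A : X -> Prop) (f : X -> R) : ereal :=
  match excluded_middle_informative (exists v, choquet_fin mu A f v) with
  | left H => EFin (proj1_sig (constructive_indefinite_description _ H))
  | right _ => EInf
  end.

(* Consider the monotone measure that gives mass 1 to every nonempty set.  For
   it, the Choquet integral of a nonnegative function attaining its supremum
   is that supremum, so the indicator f of a singleton {t} has integral 1,
   while the integrals of g f^2 and h f^2 are g(t) and h(t).  The inequality
   would then force 1 <= c (g(t) h(t))^(1/4) with c independent of t, which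
   fails where g h is small enough. *)

From Stdlib Require Import Reals Lra.
From Coquelicot Require Import Coquelicot.
From Stdlib Require Import FunctionalExtensionality PropExtensionality Classical ClassicalEpsilon.
Open Scope R_scope.

Lemma is_RInt_const_R (a b v : R) : is_RInt (fun _ => v) a b ((b - a) * v).
Proof. exact (is_RInt_const (V:=R_NormedModule) a b v). Qed.

Lemma is_RInt_step (al a b : R) (phi : R -> R) :
  a <= b ->
  (forall s, a < s < b -> phi s = if Rle_dec s al then 1 else 0) ->
  is_RInt phi a b (Rmax a (Rmin b al) - a).
Proof.
  intros Hab Hphi.
  set (m := Rmax a (Rmin b al)).
  assert (Ham : a <= m) by apply Rmax_l.
  assert (Hmb : m <= b) by (apply Rmax_lub; [lra | apply Rmin_l]).
  replace (m - a) with (plus ((m - a) * 1) ((b - m) * 0))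
    by (unfold plus; simpl; ring).
  apply (is_RInt_Chasles (V:=R_NormedModule)) with m.
  - apply (is_RInt_ext (fun _ => 1)); [|apply is_RInt_const_R].
    intros s Hs. rewrite Rmin_left, Rmax_right in Hs by lra.
    rewrite Hphi by lra.
    destruct (Rle_dec s al) as [|Hnot]; [reflexivity|].
    exfalso; apply Hnot.
    assert (s < Rmin b al) by (unfold m, Rmax in Hs; destruct Rle_dec; lra).
    pose proof (Rmin_r b al); lra.
  - apply (is_RInt_ext (fun _ => 0)); [|apply is_RInt_const_R].
    intros s Hs. rewrite Rmin_left, Rmax_right in Hs by lra.
    rewrite Hphi by lra.
    destruct (Rle_dec s al); [exfalso|reflexivity].
    assert (Rmin b al < s) by (pose proof (Rmax_r a (Rmin b al)); unfold m in Hs; lra).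
    unfold Rmin in *; destruct Rle_dec; lra.
Qed.

Lemma improper_RInt_step (al : R) (phi : R -> R) :
  0 <= al ->
  (forall s, 0 < s -> phi s = if Rle_dec s al then 1 else 0) ->
  improper_RInt_0_inf phi al.
Proof.
  intros Hal Hphi eps Heps.
  exists (eps / 2), al; split; [lra|].
  intros a b Ha Ha0 Hb Hab.
  assert (Hint : is_RInt phi a b (Rmax a al - a)).
  { rewrite <- (Rmin_right b al Hb).
    apply is_RInt_step; [assumption|]. intros s Hs; apply Hphi; lra. }
  exists (ex_RInt_Reals_0 _ _ _ (ex_intro _ _ Hint)).
  rewrite <- RInt_Reals, (is_RInt_unique _ _ _ _ Hint).
  unfold Rmax; destruct Rle_dec; unfold Rabs; destruct Rcase_abs; lra.
Qed.

Lemma improper_RInt_0_inf_unique (phi : R -> R) (v w : R) :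
  improper_RInt_0_inf phi v -> improper_RInt_0_inf phi w -> v = w.
Proof.
  intros Hv Hw. apply cond_eq; intros eps Heps.
  destruct (Hv (eps / 2)) as [av [Bv [Hav Hv']]]; [lra|].
  destruct (Hw (eps / 2)) as [aw [Bw [Haw Hw']]]; [lra|].
  set (a := Rmin av aw). set (b := Rmax (Rmax Bv Bw) a).
  assert (0 < a) by (apply Rmin_pos; lra).
  assert (a <= av) by apply Rmin_l. assert (a <= aw) by apply Rmin_r.
  assert (Bv <= b) by (eapply Rle_trans; [apply Rmax_l | apply Rmax_l]).
  assert (Bw <= b) by (eapply Rle_trans; [apply Rmax_r | apply Rmax_l]).
  assert (a <= b) by apply Rmax_r.
  destruct (Hv' a b) as [pv Ev]; try assumption.
  destruct (Hw' a b) as [pw Ew]; try assumption.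
  rewrite (RiemannInt_P5 pv pw) in Ev.
  replace (v - w) with (- (RiemannInt pw - v) + (RiemannInt pw - w)) by ring.
  eapply Rle_lt_trans; [apply Rabs_triang|]. rewrite Rabs_Ropp. lra.
Qed.

Lemma choquet_fin_choquet {X : Type} {F : (X -> Prop) -> Prop}
  (mu : monotone_measure F) (A : X -> Prop) (f : X -> R) (v : R) :
  choquet_fin mu A f v -> choquet mu A f = EFin v.
Proof.
  intros Hv. unfold choquet.
  destruct excluded_middle_informative as [Hex|Hnex].
  - destruct constructive_indefinite_description as [w Hw]; simpl.
    f_equal. exact (improper_RInt_0_inf_unique _ _ _ (proj2 Hw) (proj2 Hv)).
  - exfalso; apply Hnex; exists v; exact Hv.
Qed.

Section NonemptyMeasure.
Variables (X : Type) (F : (X -> Prop) -> Prop) (x0 : X).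

Definition nonempty_indicator (A : X -> Prop) : ereal :=
  if excluded_middle_informative (exists x, A x) then EFin 1 else EFin 0.

Definition nonempty_measure : monotone_measure F.
Proof.
  refine {| mm_fun := nonempty_indicator |}; unfold nonempty_indicator.
  - intros A _. destruct excluded_middle_informative; simpl; lra.
  - destruct excluded_middle_informative as [[x []]|]; reflexivity.
  - destruct excluded_middle_informative as [|Hnex]; simpl; [lra|].
    exfalso; apply Hnex; exists x0; exact I.
  - intros A B _ _ HAB.
    destruct (excluded_middle_informative (exists x, A x)) as [[x Hx]|];
      destruct (excluded_middle_informative (exists x, B x)) as [|HnB];
      simpl; try lra.
    exfalso; apply HnB; exists x; auto.
Defined.

Lemma choquet_nonempty_measure_max (G : X -> R) (t : X) :
  0 <= G t -> (forall x, G x <= G t) ->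
  choquet nonempty_measure (fun _ => True) G = EFin (G t).
Proof.
  intros HGt Hmax. apply choquet_fin_choquet. split.
  - intros s _. simpl; unfold nonempty_indicator.
    destruct excluded_middle_informative; discriminate.
  - apply improper_RInt_step; [assumption|].
    intros s Hs. simpl; unfold nonempty_indicator.
    destruct excluded_middle_informative as [[x [_ Hx]]|Hnex];
      destruct (Rle_dec s (G t)) as [Hle|Hnle]; try reflexivity.
    + exfalso; apply Hnle. pose proof (Hmax x); lra.
    + exfalso; apply Hnex. exists t; auto.
Qed.

End NonemptyMeasure.

Definition singleton_indicator {X : Type} (t x : X) : R :=
  if excluded_middle_informative (x = t) then 1 else 0.

Lemma singleton_indicator_ge0 {X : Type} (t x : X) : 0 <= singleton_indicator t x.
Proof. unfold singleton_indicator; destruct excluded_middle_informative; lra. Qed.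

Lemma singleton_indicator_at {X : Type} (t : X) : singleton_indicator t t = 1.
Proof. unfold singleton_indicator; destruct excluded_middle_informative; congruence. Qed.

Lemma singleton_indicator_off {X : Type} (t x : X) :
  x <> t -> singleton_indicator t x = 0.
Proof. unfold singleton_indicator; destruct excluded_middle_informative; congruence. Qed.

Lemma pred_ext {X : Type} (A B : X -> Prop) : (forall x, A x <-> B x) -> A = B.
Proof.
  intros HAB. apply functional_extensionality; intros x.
  apply propositional_extensionality, HAB.
Qed.

Lemma measurable_singleton_indicator (X : Type) (F : (X -> Prop) -> Prop) (t : X) :
  sigma_algebra X F -> F (fun x => x = t) ->
  measurable_fun F (singleton_indicator t).
Proof.
  intros HF Ht s.
  destruct (Rle_dec s 0) as [Hs0|Hs0]; [|destruct (Rle_dec s 1) as [Hs1|Hs1]].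
  - replace (fun x => s <= singleton_indicator t x) with (fun x : X => ~ False).
    + apply sa_compl, sa_empty; assumption.
    + apply pred_ext; intros x; split; [|tauto].
      intros _. pose proof (singleton_indicator_ge0 t x); lra.
  - replace (fun x => s <= singleton_indicator t x) with (fun x : X => x = t);
      [assumption|].
    apply pred_ext; intros x; split.
    + intros ->. rewrite singleton_indicator_at; lra.
    + intros Hx. apply NNPP; intros Hxt.
      rewrite singleton_indicator_off in Hx by assumption; lra.
  - replace (fun x => s <= singleton_indicator t x) with (fun x : X => False);
      [apply sa_empty; assumption|].
    apply pred_ext; intros x; split; [tauto|].
    unfold singleton_indicator; destruct excluded_middle_informative; lra.
Qed.

Lemma choquet_nonempty_measure_supported (X : Type) (F : (X -> Prop) -> Prop)
  (x0 t : X) (G : X -> R) :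
  (forall x, 0 <= G x) -> (forall x, x <> t -> G x = 0) ->
  choquet (nonempty_measure X F x0) (fun _ => True) G = EFin (G t).
Proof.
  intros HG0 HGt. apply choquet_nonempty_measure_max; [apply HG0|].
  intros x. destruct (classic (x = t)) as [->|Hxt]; [lra|].
  rewrite HGt by assumption. apply HG0.
Qed.

Lemma epow14_EFin (a : R) :
  0 <= a -> exists r, 0 <= r /\ r ^ 4 = a /\ epow14 (EFin a) = EFin r.
Proof.
  intros Ha. unfold epow14. destruct (Rle_dec a 0) as [Ha0|Ha0].
  - exists 0. split; [lra|]. split; [simpl; lra | reflexivity].
  - exists (Rpower a (1/4)).
    split; [left; apply exp_pos|]. split; [|reflexivity].
    rewrite <- Rpower_pow by apply exp_pos.
    rewrite Rpower_mult. replace (1/4 * INR 4) with 1 by (simpl; field).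
    apply Rpower_1; lra.
Qed.

Lemma mul_quarter_roots_lt_1 (c u v : R) :
  0 <= c -> 0 <= u -> 0 <= v -> u ^ 4 * v ^ 4 < / (c ^ 4 + 1) -> c * u * v < 1.
Proof.
  intros Hc Hu Hv Huv.
  assert (Hc4 : 0 <= c ^ 4) by (apply pow_le; lra).
  assert (Hp : 0 <= u ^ 4 * v ^ 4) by (apply Rmult_le_pos; apply pow_le; lra).
  assert (Hprod : (u ^ 4 * v ^ 4) * (c ^ 4 + 1) < 1).
  { apply (Rmult_lt_compat_r (c ^ 4 + 1)) in Huv; [|lra].
    rewrite Rinv_l in Huv by lra. exact Huv. }
  assert (Hw4 : (c * u * v) ^ 4 < 1) by (replace ((c * u * v) ^ 4) with (c ^ 4 * (u ^ 4 * v ^ 4)) by ring; nra).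
  destruct (Rlt_or_le (c * u * v) 1) as [|Hw]; [assumption|].
  pose proof (pow_R1_Rle _ 4 Hw). lra.
Qed.

Theorem mainTheorem4 (X : Type) (F : (X -> Prop) -> Prop)
  (HF : sigma_algebra X F)
  (Hsing : forall t : X, F (fun x => x = t))
  (g h : X -> R)
  (Hg0 : forall x, 0 <= g x) (Hh0 : forall x, 0 <= h x)
  (Hgm : measurable_fun F g) (Hhm : measurable_fun F h)
  (Hinf : forall eps, 0 < eps -> exists x, g x * h x < eps) :
  ~ exists c : monotone_measure F -> R,
      (forall mu, 0 <= c mu) /\
      forall (mu : monotone_measure F) (f : X -> R),
        (forall x, 0 <= f x) -> measurable_fun F f ->
        elt (choquet mu (fun _ => True) f) EInf ->
        ele (choquet mu (fun _ => True) f)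
            (emul (emul (EFin (c mu))
                        (epow14 (choquet mu (fun _ => True) (fun x => g x * (f x)^2))))
                  (epow14 (choquet mu (fun _ => True) (fun x => h x * (f x)^2)))).
Proof.
  intros [c [Hc Hbound]].
  destruct (Hinf 1 ltac:(lra)) as [x0 _].
  set (mu := nonempty_measure X F x0).
  assert (Hd : 0 < / (c mu ^ 4 + 1))
    by (apply Rinv_0_lt_compat; pose proof (pow_le _ 4 (Hc mu)); lra).
  destruct (Hinf _ Hd) as [t Ht].
  set (f := singleton_indicator t).
  assert (Hf : choquet mu (fun _ => True) f = EFin 1).
  { rewrite <- (singleton_indicator_at t).
    apply (choquet_nonempty_measure_supported X F x0 t f);
      [apply singleton_indicator_ge0 | apply singleton_indicator_off]. }
  assert (Hkf : forall k, (forall x, 0 <= k x) ->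
            choquet mu (fun _ => True) (fun x => k x * f x ^ 2) = EFin (k t)).
  { intros k Hk.
    replace (k t) with (k t * f t ^ 2)
      by (unfold f; rewrite singleton_indicator_at; ring).
    apply (choquet_nonempty_measure_supported X F x0 t (fun x => k x * f x ^ 2)).
    - intros x. apply Rmult_le_pos; [apply Hk | apply pow_le, singleton_indicator_ge0].
    - intros x Hxt. unfold f; rewrite singleton_indicator_off by assumption. ring. }
  specialize (Hbound mu f (singleton_indicator_ge0 t)
                (measurable_singleton_indicator X F t HF (Hsing t))).
  rewrite Hf, (Hkf g Hg0), (Hkf h Hh0) in Hbound.
  destruct (epow14_EFin (g t) (Hg0 t)) as [u [Hu [Hu4 Hgu]]].
  destruct (epow14_EFin (h t) (Hh0 t)) as [v [Hv [Hv4 Hhv]]].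
  rewrite Hgu, Hhv in Hbound. specialize (Hbound I). simpl in Hbound.
  rewrite <- Hu4, <- Hv4 in Ht.
  pose proof (mul_quarter_roots_lt_1 (c mu) u v (Hc mu) Hu Hv Ht). lra.
Qed.
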